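(* Let $\epsilon\in(0,1)$ and $T\in\mathbb{N}$, and let $k\in\mathbb{N}$. Let $w\in\{0,1\}^T$ be a random variable satisfying the $\epsilon$-martingale condition. Then \[ \Pr[w \text{ violates } k\text{-CP}] \le \Pr[w\text{ violates } k\text{-slot-CP}] \le T\cdot\exp\bigl(-\Omega(\epsilon^3(1-O(\epsilon))k)\bigr). \]
   Context: Characteristic strings and forks. A characteristic string is $w=w_1\dots w_n\in\{0,1\}^n$; index $i$ is honest if $w_i=0$ and adversarial if $w_i=1$. A fork for $w$ is a rooted tree $F=(V,E)$ with edges directed away from the root $r$, together with a labeling $\ell:V\to\{0,\dots,n\}$, such that (F1) $\ell(r)=0$; (F2) labels strictly increase along every directed path; (F3) every honest index is the label of exactly one vertex; (F4) if $i<j$ are honest indices then the vertex labeled $i$ has strictly smaller depth than the vertex labeled $j$. Write $F\vdash w$. A vertex is honest if it is the root or its label is an honest index. A tine is a directed path starting at the root (not necessarily ending at a leaf); its length is its number of edges, $\ell(t)$ is the label of its last vertex, and the depth of a vertex is the length of the tine ending at it. A tine $t$ is viable if its length is at least the depth of every honest vertex $v$ with $\ell(v)\le\ell(t)$. For a tine $t$, the trimmed tine $t^{\lceil k}$ is the portion of $t$ consisting of vertices labeled in $\{0,\dots,\ell(t)-k\}$; for tines $t_1,t_2$, $t_1\preceq t_2$ means $t_1$ is a prefix of $t_2$. $k$-slot-CP: a fork $F\vdash w$ satisfies $k$-slot-CP if for all pairs $(t_1,t_2)$ of viable tines of $F$ with $\ell(t_1)\le\ell(t_2)$, $t_1^{\lceil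 k}\preceq t_2$; $w$ satisfies $k$-slot-CP if every fork for $w$ does, and otherwise $w$ violates $k$-slot-CP. $k$-CP is the analogous (traditional) property where instead of removing the vertices of the last $k$ slots, the last $k$ blocks (vertices) of $t_1$ are removed; a $k$-CP violation implies a $k$-slot-CP violation. A random variable $W=(W_1,\dots,W_n)\in\{0,1\}^n$ satisfies the $\epsilon$-martingale condition if for every $t$, $\Pr[W_t=1\mid W_1,\dots,W_{t-1}]\le(1-\epsilon)/2$ (for arbitrary conditioning values). *)

From HB Require Import structures.
From Stdlib Require Import Reals.
From mathcomp Require Import all_boot all_order all_algebra.
From mathcomp Require Import boolp Rstruct.

Set Implicit Arguments.
Unset Strict Implicit.
Unset Printing Implicit Defensive.

Import Order.TTheory GRing.Theory Num.Theory.

(* Characteristic strings: w = w_1 ... w_n given as a seq bool,        *)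
(* w_i = nth true w (i-1); true = 1 = adversarial, false = 0 = honest. *)

Definition honest_index (w : seq bool) (i : nat) : bool :=
  (0 < i <= size w) && ~~ nth true w i.-1.

Record ltree := LTree {
  vtx : finType;
  root : vtx;
  parent : vtx -> option vtx;
  label : vtx -> nat
}.

Section Tree.
Variable F : ltree.

Definition pstep (v : vtx F) : vtx F := odflt v (@parent F v).

Definition anc (u v : vtx F) : bool :=
  [exists n : 'I_#|vtx F|, iter n pstep v == u].

Definition depth (v : vtx F) : nat := #|[set u | anc u v]|.-1.

End Tree.

Definition is_fork (w : seq bool) (F : ltree) : Prop :=
  (forall v, @parent F v = None <-> v = root F) /\
  [/\ 
      @label F (root F) = 0%N,
      (forall v, @label F v <= size w)%N,
      (forall u v, @parent F v = Some u -> (@label F u < @label F v)%N),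
      (forall i, honest_index w i -> #|[set v | @label F v == i]| = 1%N) &
      (forall i j (vi vj : vtx F), honest_index w i -> honest_index w j ->
         (i < j)%N -> @label F vi = i -> @label F vj = j ->
         (depth vi < depth vj)%N)].

Definition honest_vertex (w : seq bool) (F : ltree) (v : vtx F) : bool :=
  (v == root F) || honest_index w (@label F v).

(* tines are identified with their terminal vertex *)
Definition viable (w : seq bool) (F : ltree) (t : vtx F) : Prop :=
  forall v, honest_vertex w v -> (@label F v <= @label F t)%N ->
    (depth v <= depth t)%N.

(* t1^{⌈k} ⪯ t2 : every vertex of t1 labelled in {0,...,ℓ(t1)-k} lies on t2
   (if ℓ(t1) < k the trimmed tine is empty, trivially a prefix). *)
Definition trim_slots_prefix (F : ltree) (k : nat) (t1 t2 : vtx F) : Prop :=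
  forall u, anc u t1 -> (@label F u + k <= @label F t1)%N -> anc u t2.

(* traditional k-CP: remove the last k blocks (vertices) of t1 *)
Definition trim_blocks_prefix (F : ltree) (k : nat) (t1 t2 : vtx F) : Prop :=
  forall u, anc u t1 -> (depth u + k <= depth t1)%N -> anc u t2.

Definition violates_slot_cp (k : nat) (w : seq bool) : Prop :=
  exists F : ltree, is_fork w F /\
    exists t1 t2 : vtx F, [/\ viable w t1, viable w t2,
      (@label F t1 <= @label F t2)%N & ~ trim_slots_prefix k t1 t2].

Definition violates_cp (k : nat) (w : seq bool) : Prop :=
  exists F : ltree, is_fork w F /\
    exists t1 t2 : vtx F, [/\ viable w t1, viable w t2,
      (@label F t1 <= @label F t2)%N & ~ trim_blocks_prefix k t1 t2].

Local Open Scope ring_scope.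

Definition is_distr (T : nat) (P : T.-tuple bool -> R) : Prop :=
  (forall x, 0 <= P x) /\ \sum_x P x = 1.

Definition Pr (T : nat) (P : T.-tuple bool -> R) (A : seq bool -> Prop) : R :=
  \sum_(x : T.-tuple bool | `[< A (tval x) >]) P x.

(* ε-martingale condition (0-indexed t): for every t < T and every value b
   of (W_1..W_t), Pr[W_{t+1} = 1 /\ prefix = b] <= (1-ε)/2 * Pr[prefix = b];
   i.e. Pr[W_{t+1}=1 | prefix = b] <= (1-ε)/2 whenever the conditioning
   event has positive probability. *)
Definition martingale_cond (eps : R) (T : nat) (P : T.-tuple bool -> R) : Prop :=
  forall (t : nat) (b : seq bool), (t < T)%N -> size b = t ->
    Pr P (fun x => take t x = b /\ nth false x t = true)
      <= (1 - eps) / 2 * Pr P (fun x => take t x = b).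

(* If two viable tines diverge at their last common honest vertex x, each honest
   slot of the next k slots is skipped by one of them, and a viable tine can
   skip an honest slot h only if some interval (a, b] with lab x <= a < h <= b
   has no honest majority.  So violating k-slot-CP forces a window of k slots
   none of which is Catalan, i.e. none is a new strict minimum of the walk
   S = #adversarial - #honest that is never exceeded later.  Along the walk
   this is decided by a finite-state scan, and an exponential potential of the
   scan state is a supermartingale under the eps-martingale condition; its
   value (1 - eps^3/8)^k at the start bounds the probability of a bad window,
   and a union bound over the T possible windows concludes.  A k-CP violation
   is a k-slot-CP violation since a tine has at most one block per slot. *)

From Pilot Require Import Defs.
From Stdlib Require Import Reals.
From mathcomp Require Import all_boot all_order all_algebra.
From mathcomp Require Import boolp Rstruct.
From mathcomp Require Import zify ring lra.
Import Order.TTheory GRing.Theory Num.Theory.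
Set Implicit Arguments.
Unset Strict Implicit.
Unset Printing Implicit Defensive.

Definition adversarial_index (w : seq bool) (i : nat) : bool :=
  (0 < i <= size w) && nth true w i.-1.

Lemma honest_or_adversarial w i : 0 < i <= size w ->
  honest_index w i || adversarial_index w i.
Proof. by rewrite /honest_index /adversarial_index => ->; case: nth. Qed.

Definition walk (w : seq bool) (t : nat) : int :=
  ((count (adversarial_index w) (iota 1 t))%:Z
   - (count (honest_index w) (iota 1 t))%:Z)%R.

Lemma walkB w a b : a <= b ->
  (walk w b - walk w a = (count (adversarial_index w) (iota a.+1 (b - a)))%:Z
                         - (count (honest_index w) (iota a.+1 (b - a)))%:Z)%R.
Proof.
move=> Hab; have -> : b = a + (b - a) by rewrite subnKC.
by rewrite /walk addKn (iotaD 1 a) !count_cat add1n !PoszD; lia.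
Qed.

Lemma walkS w t : t < size w ->
  walk w t.+1 = (walk w t + (if nth false w t then 1 else -1))%R.
Proof.
move=> Ht; rewrite /walk -(addn1 t) (iotaD 1 t) !count_cat /= add1n.
rewrite /adversarial_index /honest_index /= (set_nth_default false) // Ht.
by case: nth; rewrite /= !PoszD; lia.
Qed.

(* [h] is Catalan relative to [i]: every interval (a, b] containing [h] with
   [a >= i] has a strict honest majority. *)
Definition catalan (w : seq bool) (i h : nat) : Prop :=
  forall a b, i <= a < h -> h <= b <= size w -> (walk w b < walk w a)%R.

Definition catalan_free (k i : nat) (w : seq bool) : Prop :=
  forall h, i < h <= i + k -> ~ catalan w i h.

Lemma not_catalan_of_count w i h a b : i <= a < h -> h <= b <= size w ->
  count (honest_index w) (iota a.+1 (b - a))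
    <= count (adversarial_index w) (iota a.+1 (b - a)) ->
  ~ catalan w i h.
Proof.
move=> Ha Hb Hc Hcat; have := Hcat a b Ha Hb.
have Hab : a <= b by lia.
by have := walkB w Hab; move: Hc; rewrite -lez_nat; lia.
Qed.

Lemma adversarial_not_catalan w i h : i < h -> adversarial_index w h ->
  ~ catalan w i h.
Proof.
move=> Hih Hh; have /andP [/andP [Hh0 Hhs] _] := Hh.
apply: (@not_catalan_of_count _ _ _ h.-1 h); try lia.
have -> : h - h.-1 = 1 by lia.
by rewrite prednK //= Hh; case: honest_index.
Qed.

Section Fork.
Variables (w : seq bool) (F : ltree).
Hypothesis HF : is_fork w F.

Local Notation V := (vtx F).
Local Notation lab := (@label F).
Local Notation rt := (Defs.root F).
Local Notation ps := (@pstep F).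

Lemma parent_root : @parent F rt = None.
Proof. by case: HF => H _; apply/H. Qed.

Lemma label_root : lab rt = 0.
Proof. by case: HF => _ []. Qed.

Lemma label_le_size v : lab v <= size w.
Proof. by case: HF => _ [] _ H _ _ _. Qed.

Lemma pstep_root : ps rt = rt.
Proof. by rewrite /pstep parent_root. Qed.

Lemma label_pstep v : v != rt -> lab (ps v) < lab v.
Proof.
case: HF => Hroot [_ _ Hpar _ _] Hv; rewrite /pstep.
case E: (@parent F v) => [u|] /=; first exact: Hpar.
by move/Hroot: E Hv => ->; rewrite eqxx.
Qed.

Lemma label_pstep_le v : lab (ps v) <= lab v.
Proof.
by case: (eqVneq v rt) => [->|/label_pstep/ltnW //]; rewrite pstep_root.
Qed.

Lemma label_iter n v : lab (iter n ps v) <= lab v.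
Proof. by elim: n => //= n IH; apply: leq_trans (label_pstep_le _) IH. Qed.

Lemma label_iter_lt n v : iter n ps v != v -> lab (iter n ps v) < lab v.
Proof.
elim: n => [|n IH] /=; first by rewrite eqxx.
case: (eqVneq (iter n ps v) v) => [E|/IH H _].
  rewrite E => Hv; apply: label_pstep.
  by apply: contraNneq Hv => ->; rewrite pstep_root.
exact: leq_ltn_trans (label_pstep_le _) H.
Qed.

Lemma iter_pstep_root n : iter n ps rt = rt.
Proof. by elim: n => //= n ->; rewrite pstep_root. Qed.

Lemma iter_pstep_fixed n u : 0 < n -> iter n ps u = u -> u = rt.
Proof.
case: n => // n _; rewrite iterSr => E.
apply/eqP; apply: contraTT (label_iter n (ps u)).
by rewrite E -ltnNge; apply: label_pstep.
Qed.

Lemma iter_pstep_reach_root v : exists2 m, m < #|V| & iter m ps v = rt.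
Proof.
set s := [seq iter m ps v | m <- iota 0 #|V|.+1].
have /(uniqPn v) [i [j [Hij Hj E]]] : ~~ uniq s.
  apply/negP => /card_uniqP Hs.
  by have := max_card (mem s); rewrite Hs size_map size_iota ltnn.
rewrite size_map size_iota in Hj.
rewrite !(nth_map 0) ?size_iota ?(ltn_trans Hij) // !nth_iota ?(ltn_trans Hij) //= in E.
exists i; first lia.
apply: (@iter_pstep_fixed (j - i)); first by rewrite subn_gt0.
by rewrite -iterD subnK ?(ltnW Hij).
Qed.

Definition ancestor (u v : V) : Prop := exists n, iter n ps v = u.

Lemma ancP u v : reflect (ancestor u v) (anc u v).
Proof.
apply: (iffP existsP) => [[n /eqP <-]|[n E]]; first by exists n.
case: (ltnP n #|V|) => Hn; first by exists (Ordinal Hn); rewrite E.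
have [m Hm Em] := iter_pstep_reach_root v.
exists (Ordinal Hm) => /=; rewrite Em -E.
by rewrite -(subnK (ltnW (leq_trans Hm Hn))) iterD Em iter_pstep_root.
Qed.

Lemma ancestor_refl v : ancestor v v.
Proof. by exists 0. Qed.

Lemma ancestor_trans u v x : ancestor u v -> ancestor v x -> ancestor u x.
Proof. by move=> [a <-] [b <-]; exists (a + b); rewrite iterD. Qed.

Lemma ancestor_total u v t : ancestor u t -> ancestor v t ->
  ancestor u v \/ ancestor v u.
Proof.
move=> [a <-] [b <-]; case: (leqP a b) => H.
  by right; exists (b - a); rewrite -iterD subnK.
by left; exists (a - b); rewrite -iterD subnK ?(ltnW H).
Qed.

Lemma ancestor_pstep u v : ancestor u v -> u != v -> ancestor u (ps v).
Proof. by case=> [[|n] <-]; rewrite ?eqxx // iterSr; exists n. Qed.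

Lemma label_ancestor u v : ancestor u v -> lab u <= lab v.
Proof. by move=> [n <-]; apply: label_iter. Qed.

Lemma label_ancestor_lt u v : ancestor u v -> u != v -> lab u < lab v.
Proof. by move=> [n <-]; apply: label_iter_lt. Qed.

Lemma root_ancestor v : ancestor rt v.
Proof. by have [m _ E] := iter_pstep_reach_root v; exists m. Qed.

Lemma label_pos v : v != rt -> 0 < lab v.
Proof. by move/label_pstep; case: (lab v). Qed.

Lemma tine_set_pstep v : v != rt ->
  [set u | anc u v] = v |: [set u | anc u (ps v)].
Proof.
move=> Hv; apply/setP => u; rewrite !inE.
apply/ancP/predU1P => [[[|n] <-]|[->|/ancP [n <-]]]; last 2 first.
- exact: ancestor_refl.
- by exists n.+1; rewrite iterSr.
- by left.
- by right; apply/ancP; exists n; rewrite -iterSr.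
Qed.

Lemma depth_pstep v : v != rt -> depth v = (depth (ps v)).+1.
Proof.
move=> Hv; rewrite /depth tine_set_pstep // cardsU1 inE.
have -> : anc v (ps v) = false.
  by apply/negbTE/negP => /ancP /label_ancestor; rewrite leqNgt label_pstep.
suff : 0 < #|[set u | anc u (ps v)]| by case: #|_|.
by apply/card_gt0P; exists (ps v); rewrite inE; apply/ancP/ancestor_refl.
Qed.

Lemma depth_root : depth rt = 0.
Proof.
rewrite /depth (_ : [set u | anc u rt] = [set rt]) ?cards1 //.
apply/setP => u; rewrite !inE; apply/ancP/eqP => [[n <-]|->].
  exact: iter_pstep_root.
exact: ancestor_refl.
Qed.

Lemma depth_sub_le_count (Lp : pred nat) y t : ancestor y t ->
  (forall v, ancestor v t -> ~ ancestor v y -> Lp (lab v)) ->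
  depth t - depth y <= count Lp (iota (lab y).+1 (lab t - lab y)).
Proof.
move=> Hyt HL.
have sub_yt : [set u | anc u y] \subset [set u | anc u t].
  by apply/subsetP => u; rewrite !inE => /ancP Hu; apply/ancP/(ancestor_trans Hu).
have y_in : y \in [set u | anc u y] by rewrite inE; apply/ancP/ancestor_refl.
set B := [set u | anc u t] :\: [set u | anc u y].
have -> : depth t - depth y = #|B|.
  have : 0 < #|[set u | anc u y]| by apply/card_gt0P; exists y.
  by rewrite /B cardsDS // /depth; lia.
rewrite cardE -(size_map lab) -size_filter; apply: uniq_leq_size.
  rewrite map_inj_in_uniq ?enum_uniq // => u v.
  rewrite !mem_enum !inE => /andP [_ /ancP Hu] /andP [_ /ancP Hv] Euv.
  apply/eqP/negPn/negP => Huv.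
  case: (ancestor_total Hu Hv) => H.
    by move: (label_ancestor_lt H Huv); rewrite Euv ltnn.
  by rewrite eq_sym in Huv; move: (label_ancestor_lt H Huv); rewrite Euv ltnn.
move=> n /mapP [v]; rewrite mem_enum !inE => /andP [Hvy /ancP Hvt] ->.
have Hny : ~ ancestor v y by move/ancP; apply/negP.
rewrite mem_filter HL // mem_iota /=.
have Hvy' : y != v by apply: contraNneq Hvy => <-; apply/ancP/ancestor_refl.
case: (ancestor_total Hyt Hvt) => [Hyv|//].
have := label_ancestor_lt Hyv Hvy'; have := label_ancestor Hvt; lia.
Qed.

Lemma honest_label_uniq i u v :
  honest_index w i -> lab u = i -> lab v = i -> u = v.
Proof.
case: HF => _ [_ _ _ H3 _] Hi Eu Ev.
have /eqP /cards1P [x Ex] := H3 i Hi.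
have : u \in [set v | lab v == i] by rewrite inE Eu.
have : v \in [set v | lab v == i] by rewrite inE Ev.
by rewrite Ex !inE => /eqP -> /eqP ->.
Qed.

Lemma honest_label_exists i : honest_index w i -> exists v, lab v = i.
Proof.
case: HF => _ [_ _ _ H3 _] Hi.
have /eqP /cards1P [x Ex] := H3 i Hi.
have : x \in [set v | lab v == i] by rewrite Ex inE.
by rewrite inE => /eqP <-; exists x.
Qed.

Lemma honest_nonroot (v : V) : honest_index w (lab v) -> v != rt.
Proof. by apply: contraTneq => ->; rewrite label_root. Qed.

Lemma honest_vertex_index (v : V) :
  honest_vertex w v -> v != rt -> honest_index w (lab v).
Proof. by case/orP => [/eqP ->|//]; rewrite eqxx. Qed.

Lemma depth_honest_lt (u v : V) : honest_vertex w u -> honest_index w (lab v) ->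
  lab u < lab v -> depth u < depth v.
Proof.
case/orP => [/eqP ->|Hu] Hv Huv.
  by rewrite depth_root depth_pstep // honest_nonroot.
by case: HF => _ [_ _ _ _ H4]; apply: H4 Hu Hv Huv erefl erefl.
Qed.

Lemma honest_depth_growth (y : V) n : honest_vertex w y -> exists z,
  [/\ honest_vertex w z, lab z <= lab y + n &
      depth y + count (honest_index w) (iota (lab y).+1 n) <= depth z].
Proof.
move=> Hy; elim: n => [|n [z [Hz Hlz Hdz]]].
  by exists y; rewrite !addn0.
rewrite -addn1 iotaD count_cat /= addn0.
case Hh: (honest_index w ((lab y).+1 + n)); last by exists z; split => //; lia.
have [v Ev] := honest_label_exists Hh.
have Hzv : depth z < depth v by apply: depth_honest_lt; rewrite ?Ev //; lia.
by exists v; split; rewrite /honest_vertex ?Ev ?Hh ?orbT //; lia.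
Qed.

(* Along an adversarial stretch from [y] to [s] the tine grows by at most one
   block per adversarial slot, while the honest vertices, whose depth is
   bounded by that of [s], grow by at least one block per honest slot. *)
Lemma adversarial_stretch_count (y s : V) j :
  honest_vertex w y -> ancestor y s -> lab s <= j ->
  (forall v, ancestor v s -> ~ ancestor v y -> adversarial_index w (lab v)) ->
  (forall z, honest_vertex w z -> lab z <= j -> depth z <= depth s) ->
  count (honest_index w) (iota (lab y).+1 (j - lab y))
    <= count (adversarial_index w) (iota (lab y).+1 (j - lab y)).
Proof.
move=> Hy Hys Hsj Hadv Hdeep.
have Hcs := depth_sub_le_count Hys Hadv.
have Hys' := label_ancestor Hys.
have [z [Hz Hlz Hdz]] := honest_depth_growth (j - lab y) Hy.
have Hzs : depth z <= depth s by apply: Hdeep; lia.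
have Hmono : count (adversarial_index w) (iota (lab y).+1 (lab s - lab y))
    <= count (adversarial_index w) (iota (lab y).+1 (j - lab y)).
  rewrite (_ : j - lab y = lab s - lab y + (j - lab s)); last by lia.
  by rewrite iotaD count_cat leq_addr.
lia.
Qed.

Lemma pstep_ancestor v : ancestor (ps v) v.
Proof. by exists 1. Qed.

Lemma adversarial_of_not_honest (v y : V) : ~ ancestor v y ->
  ~~ honest_index w (lab v) -> adversarial_index w (lab v).
Proof.
move=> Hvy /negbTE Hv.
have Hvr : v != rt by apply: contra_notN Hvy => /eqP ->; apply: root_ancestor.
have : 0 < lab v <= size w by rewrite label_pos ?label_le_size.
by move/honest_or_adversarial; rewrite Hv.
Qed.

(* Take the last honest vertex [y] of [t] before slot [h], and the first honest
   vertex [z] of [t] after [h] (or [t] itself if there is none): the part of [t]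
   between them is adversarial, so [adversarial_stretch_count] applies. *)
Lemma skipped_honest_slot_not_catalan (t y0 : V) h : viable w t ->
  honest_vertex w y0 -> ancestor y0 t -> honest_index w h -> lab y0 < h <= lab t ->
  (forall v, lab v = h -> ~ ancestor v t) -> ~ catalan w (lab y0) h.
Proof.
move=> Ht Hy0 Hy0t Hh /andP [Hy0h Hht] Hskip.
pose Py := [pred v | honest_vertex w v && anc v t && (lab v < h)].
have Py0 : Py y0 by rewrite /= Hy0 Hy0h andbT; apply/ancP.
case: (arg_maxnP lab Py0) => y /andP [/andP [Hy /ancP Hyt] Hyh] Hmax.
have Hy0y := Hmax y0 Py0.
have honest_above v : ancestor v t -> ~ ancestor v y -> honest_index w (lab v) ->
    h < lab v.
  move=> Hvt Hvy Hv.
  case: (ltngtP (lab v) h) => [Hlt|//|/Hskip //].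
  have /Hmax Hle : Py v by rewrite /= /honest_vertex Hv orbT Hlt andbT; apply/ancP.
  case: (ancestor_total Hyt Hvt) => [Hyv|//].
  have Hyv' : y != v by apply: contra_notN Hvy => /eqP <-; apply: ancestor_refl.
  by have := label_ancestor_lt Hyv Hyv'; lia.
have Hlt := label_le_size t.
pose Pz := [pred z | honest_vertex w z && anc z t && (h < lab z)].
case: (boolP [exists z, Pz z]) => [|Hnone].
  case/existsP => z0 Pz0.
  case: (arg_minnP lab Pz0) => z /andP [/andP [Hz /ancP Hzt] Hhz] Hmin.
  have Hzr : z != rt by apply: contraTneq Hhz => ->; rewrite label_root.
  have Hyz : ancestor y z.
    by case: (ancestor_total Hyt Hzt) => // /label_ancestor; lia.
  have Hyz' : y != z by apply: contraTneq Hhz => <-; rewrite -leqNgt ltnW.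
  have Hys := ancestor_pstep Hyz Hyz'.
  have Hlz := label_pstep Hzr; have Hzt' := label_ancestor Hzt.
  apply: (@not_catalan_of_count _ _ _ (lab y) (lab z).-1); try lia.
  apply: (adversarial_stretch_count Hy Hys); first lia.
    move=> v Hvs Hvy; apply: (adversarial_of_not_honest Hvy); apply/negP => Hv.
    have Hvt := ancestor_trans Hvs (ancestor_trans (pstep_ancestor z) Hzt).
    have Pv : Pz v.
      rewrite /= /honest_vertex Hv orbT (honest_above v Hvt Hvy Hv) andbT.
      exact/ancP.
    by have := Hmin v Pv; have := label_ancestor Hvs; lia.
  move=> z' Hz' Hlz'.
  have := depth_honest_lt Hz' (honest_vertex_index Hz Hzr) (_ : lab z' < lab z).
  by rewrite (depth_pstep Hzr); apply; lia.
apply: (@not_catalan_of_count _ _ _ (lab y) (lab t)); try lia.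
apply: (adversarial_stretch_count Hy Hyt) => // v Hvt Hvy.
apply: (adversarial_of_not_honest Hvy); apply/negP => Hv.
move/existsP: Hnone; apply; exists v.
by rewrite /= /honest_vertex Hv orbT (honest_above v Hvt Hvy Hv) andbT; apply/ancP.
Qed.

(* With [x] the last honest vertex common to [t1] and [t2], every honest slot
   of the window after [lab x] is skipped by [t1] or by [t2]. *)
Lemma tine_divergence_catalan_free k (t1 t2 u : V) :
  viable w t1 -> viable w t2 -> lab t1 <= lab t2 ->
  ancestor u t1 -> lab u + k <= lab t1 -> ~ ancestor u t2 ->
  exists i, i + k < size w /\ catalan_free k i w.
Proof.
move=> Ht1 Ht2 Hl12 Hu1 Hlu Hu2.
pose Px := [pred v | honest_vertex w v && anc v t1 && anc v t2].
have Prt : Px rt.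
  by rewrite /= /honest_vertex eqxx; apply/andP; split; apply/ancP/root_ancestor.
case: (arg_maxnP lab Prt) => x /andP [/andP [Hx /ancP Hx1] /ancP Hx2] Hmax.
have Hxu : ancestor x u.
  by case: (ancestor_total Hx1 Hu1) => // /ancestor_trans /(_ Hx2).
have Hxu' : x != u by apply: contra_notN Hu2 => /eqP <-.
have Hlxu := label_ancestor_lt Hxu Hxu'.
have Hlt1 := label_le_size t1.
exists (lab x); split => [|h /andP [Hxh Hhk]]; first lia.
have /orP [Hh|Hh] : honest_index w h || adversarial_index w h.
    by apply: honest_or_adversarial; lia.
  have [v Ev] := honest_label_exists Hh.
  have skip t : viable w t -> ancestor x t -> h <= lab t -> ~ ancestor v t ->
      ~ catalan w (lab x) h.
    move=> Ht Hxt Hht Hvt; apply: (skipped_honest_slot_not_catalan Ht Hx Hxt Hh).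
      by rewrite Hxh.
    by move=> v' Ev'; rewrite (honest_label_uniq Hh Ev' Ev).
  case: (boolP (anc v t1)) => [/ancP Hv1|/ancP Hv1].
    2: by apply: skip Ht1 Hx1 _ Hv1; lia.
  case: (boolP (anc v t2)) => [/ancP Hv2|/ancP Hv2].
    2: by apply: skip Ht2 Hx2 _ Hv2; lia.
  have Pv : Px v.
    by rewrite /= /honest_vertex Ev Hh orbT; apply/andP; split; apply/ancP.
  by have := Hmax v Pv; lia.
exact: adversarial_not_catalan.
Qed.

Lemma trim_slots_blocks_prefix k (t1 t2 : V) :
  trim_slots_prefix k t1 t2 -> trim_blocks_prefix k t1 t2.
Proof.
move=> H u Hu Hd; apply: H => //; move/ancP: Hu => Hu.
have := @depth_sub_le_count predT u t1 Hu (fun _ _ _ => erefl).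
by rewrite count_predT size_iota; have := label_ancestor Hu; lia.
Qed.

End Fork.

Lemma violates_cp_slot_cp k w : violates_cp k w -> violates_slot_cp k w.
Proof.
move=> [F [HF [t1 [t2 [H1 H2 H3 H4]]]]]; exists F; split => //.
by exists t1, t2; split => // /(trim_slots_blocks_prefix HF).
Qed.

Lemma violates_slot_cp_catalan_free k w : violates_slot_cp k w ->
  exists i, i + k < size w /\ catalan_free k i w.
Proof.
move=> [F [HF [t1 [t2 [H1 H2 H3 H4]]]]].
case: (boolP [exists u, anc u t1 && (label u + k <= label t1) && ~~ anc u t2]).
  case/existsP => u /andP [/andP [/(ancP HF) Hu1 Hlu] /negP Hu2].
  apply: (tine_divergence_catalan_free HF H1 H2 H3 Hu1 Hlu) => Hu.
  by apply: Hu2; apply/(ancP HF).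
move=> Hno; exfalso; apply: H4 => u Hu1 Hlu.
case: (boolP (anc u t2)) => // Hu2.
by move/existsP: Hno; case; exists u; rewrite Hu1 Hlu Hu2.
Qed.

(* The state of an online search, along a walk from slot [i], for a slot of
   the window [(i, i + k]] that is Catalan relative to [i]:
   - [Climb g]: no candidate; the walk is at most [g] above its running minimum;
   - [Candidate d D]: the last new strict minimum [h] of the window has not been
     exceeded since; the walk is now [d] below [h], and was at most [D] below. *)
Inductive scan_state := Climb of nat | Candidate of nat & nat.

Definition scan_step (in_window : bool) (s : scan_state) (c : bool) : scan_state :=
  match s with
  | Climb g =>
      if c then Climb g.+1 else
      if g is g'.+1 then Climb g' else
      if in_window then Candidate 0 0 else Climb 0
  | Candidate d D =>
      if c then (if d is d'.+1 then Candidate d' D else Climb D.+1)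
      else Candidate d.+1 (maxn D d.+1)
  end.

Fixpoint scan_from (k n : nat) (s : scan_state) (bits : seq bool) : scan_state :=
  if bits is c :: bits' then scan_from k n.+1 (scan_step (n < k) s c) bits' else s.

Definition scan (k : nat) (bits : seq bool) : scan_state :=
  scan_from k 0 (Climb 0) bits.

Lemma scan_rcons k bits c :
  scan k (rcons bits c) = scan_step (size bits < k) (scan k bits) c.
Proof.
rewrite /scan -[size bits]add0n; move: 0 (Climb 0).
elim: bits => [|c' bits IH] n s /=; first by rewrite addn0.
by rewrite IH addSnnS.
Qed.

Lemma range_leqS a m t : a <= m <= t.+1 -> a <= m <= t \/ m = t.+1.
Proof. by move=> /andP [Ham]; rewrite leq_eqVlt ltnS Ham => /orP [/eqP|]; auto. Qed.

Section Scan.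
Variables (S : nat -> int) (i k : nat).
Local Open Scope ring_scope.

Definition scan_inv (t : nat) (s : scan_state) : Prop :=
  match s with
  | Climb g => forall m, (i <= m <= t)%N -> S t - S m <= g%:Z
  | Candidate d D => exists h, [/\ (i < h <= i + k)%N,
       forall m, (i <= m < h)%N -> S h < S m,
       forall m, (h <= m <= t)%N -> S m <= S h,
       S h - S t = d%:Z &
       forall m, (i <= m <= t)%N -> S h - S m <= D%:Z]
  end.

Lemma scan_inv_start : scan_inv i (Climb 0).
Proof. by move=> m Hm; rewrite (_ : m = i) ?subrr //; lia. Qed.

Lemma scan_inv_climb t g c : (i <= t)%N ->
  S t.+1 = S t + (if c then 1 else -1) ->
  scan_inv t (Climb g) -> scan_inv t.+1 (scan_step (t - i < k)%N (Climb g) c).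
Proof.
move=> Hit; case: c => /= ES Hg.
  by move=> m /range_leqS [/Hg|->]; lia.
case: g Hg => [|g] Hg /=.
  2: by move=> m /range_leqS [/Hg|->]; lia.
have below m : (i <= m <= t)%N -> S t.+1 < S m by move/Hg; lia.
case: ifP => Hwin.
  2: by move=> m /range_leqS [/below|->]; lia.
exists t.+1; split; first lia.
- by move=> m Hm; apply: below; lia.
- by move=> m Hm; rewrite (_ : m = t.+1) //; lia.
- by rewrite subrr.
- by move=> m /range_leqS [/below|->]; lia.
Qed.

Lemma scan_inv_candidate t d D c : (i <= t)%N ->
  S t.+1 = S t + (if c then 1 else -1) ->
  scan_inv t (Candidate d D) ->
  scan_inv t.+1 (scan_step (t - i < k)%N (Candidate d D) c).
Proof.
move=> Hit ES [h [Hh Hbefore Hafter Hd HD]].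
have := HD t; rewrite Hit leqnn => /(_ isT) HDt.
case: c ES => /= ES.
  case: d Hd => [|d] Hd /=.
    by move=> m /range_leqS [/HD|->]; lia.
  exists h; split => //; last by move=> m /range_leqS [/HD|->]; lia.
    by move=> m /range_leqS [/Hafter|->]; lia.
  by lia.
exists h; split => //; last by move=> m /range_leqS [/HD|->]; lia.
  by move=> m /range_leqS [/Hafter|->]; lia.
by lia.
Qed.

Lemma scan_inv_step t s c : (i <= t)%N ->
  S t.+1 = S t + (if c then 1 else -1) ->
  scan_inv t s -> scan_inv t.+1 (scan_step (t - i < k)%N s c).
Proof. by case: s => [g|d D]; [apply: scan_inv_climb | apply: scan_inv_candidate]. Qed.

Lemma scan_inv_catalan t d D : scan_inv t (Candidate d D) ->
  exists h, (i < h <= i + k)%N /\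
    forall a b, (i <= a < h)%N -> (h <= b <= t)%N -> S b < S a.
Proof.
move=> [h [Hh Hbefore Hafter _ _]]; exists h; split => // a b Ha Hb.
exact: le_lt_trans (Hafter b Hb) (Hbefore a Ha).
Qed.

End Scan.

Lemma scan_inv_walk x i k n : i + n <= size x ->
  scan_inv (walk x) i k (i + n) (scan k (take n (drop i x))).
Proof.
elim: n => [|n IH] Hn; first by rewrite take0 addn0; apply: scan_inv_start.
have Hlt : n < size (drop i x) by rewrite size_drop; lia.
rewrite (take_nth false Hlt) scan_rcons size_take Hlt nth_drop addnS.
have := @scan_inv_step (walk x) i k (i + n) _ (nth false x (i + n)) (leq_addr _ _).
rewrite addKn; apply; first by apply: walkS; lia.
by apply: IH; lia.
Qed.

Lemma catalan_free_scan_climb x i k : i + k <= size x -> catalan_free k i x ->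
  exists g, scan k (drop i x) = Climb g.
Proof.
move=> Hik Hfree.
have Hi : i <= size x by lia.
have := @scan_inv_walk x i k (size x - i).
rewrite subnKC // take_oversize ?size_drop // => /(_ (leqnn _)).
case: scan => [g|d D] Hinv; first by exists g.
have [h [Hh Hcat]] := scan_inv_catalan Hinv.
by case: (Hfree h Hh).
Qed.

Local Open Scope ring_scope.

Lemma Pr_le_of_imply T (P : T.-tuple bool -> R) (A B : seq bool -> Prop) :
  (forall x, 0 <= P x) -> (forall x : T.-tuple bool, A x -> B x) -> Pr P A <= Pr P B.
Proof.
move=> HP HAB; rewrite /Pr big_mkcond [X in _ <= X]big_mkcond /=.
apply: ler_sum => x _; case: asboolP => [/HAB HB|_]; first by rewrite asboolT.
by case: asboolP.
Qed.

Lemma Pr_union_le T (P : T.-tuple bool -> R) (A : seq bool -> Prop)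
    (B : nat -> seq bool -> Prop) :
  (forall x, 0 <= P x) ->
  (forall x : T.-tuple bool, A x -> exists2 i, (i < T)%N & B i x) ->
  Pr P A <= \sum_(i < T) Pr P (B i).
Proof.
move=> HP HAB; rewrite /Pr.
pose f (i : 'I_T) (x : T.-tuple bool) := if `[< B i x >] then P x else 0.
rewrite [X in _ <= X](eq_bigr (fun i => \sum_x f i x)); last first.
  by move=> i _; rewrite big_mkcond.
rewrite exchange_big /= big_mkcond /=; apply: ler_sum => x _.
have Hterm (i : 'I_T) : 0 <= f i x by rewrite /f; case: ifP.
case: asboolP => [/HAB [i Hi HB]|_]; last exact: sumr_ge0.
rewrite (bigD1 (Ordinal Hi)) //= {1}/f asboolT // lerDl.
exact: sumr_ge0.
Qed.

Lemma Pr_le_expectation T (P : T.-tuple bool -> R) (A : seq bool -> Prop)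
    (V : seq bool -> R) :
  (forall x, 0 <= P x) -> (forall x : T.-tuple bool, 0 <= V x) ->
  (forall x : T.-tuple bool, A x -> 1 <= V x) -> Pr P A <= \sum_x P x * V x.
Proof.
move=> HP HV HA; rewrite /Pr big_mkcond /=; apply: ler_sum => x _.
case: asboolP => [/HA|_]; last exact: mulr_ge0.
exact: ler_peMr.
Qed.

Lemma sum_by_prefix (T t : nat) (G : seq bool -> T.-tuple bool -> R) : (t <= T)%N ->
  \sum_(x : T.-tuple bool) G (take t x) x =
  \sum_(b : t.-tuple bool) \sum_(x : T.-tuple bool | take t x == b) G b x.
Proof.
move=> Ht; under [RHS]eq_bigr do rewrite big_mkcond.
rewrite exchange_big /=; apply: eq_bigr => x _.
have Hs : size (take t x) == t by rewrite size_takel // size_tuple.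
rewrite (bigD1 (Tuple Hs)) //= eqxx big1 ?addr0 // => b Hb.
by case: eqP => // Eb; case/eqP: Hb; apply: val_inj.
Qed.

Definition supermartingale_potential (q : R) (V : seq bool -> R) : Prop :=
  forall b, V (rcons b false) <= V b /\
    (1 - q) * V (rcons b false) + q * V (rcons b true) <= V b.

(* [p1 / (p1 + p0) <= q] is the conditional probability of the bit [1]: if
   [V1 <= V0] the mixture is at most [V0], otherwise at most the [q]-mixture. *)
Lemma mixture_le (K : realFieldType) (q p0 p1 V0 V1 V : K) : 0 <= p0 -> 0 <= p1 ->
  p1 <= q * (p1 + p0) -> V0 <= V -> (1 - q) * V0 + q * V1 <= V ->
  p1 * V1 + p0 * V0 <= (p1 + p0) * V.
Proof.
move=> H0 H1 Hq HV0 HV.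
case: (leP V0 V1) => H.
  have X1 : 0 <= (q * (p1 + p0) - p1) * (V1 - V0) by apply: mulr_ge0; lra.
  have X2 : 0 <= (p1 + p0) * (V - ((1 - q) * V0 + q * V1)) by apply: mulr_ge0; lra.
  nra.
have X1 : 0 <= p1 * (V0 - V1) by apply: mulr_ge0; lra.
have X2 : 0 <= (p1 + p0) * (V - V0) by apply: mulr_ge0; lra.
nra.
Qed.

Section Supermartingale.
Variables (T : nat) (eps : R) (P : T.-tuple bool -> R) (V : seq bool -> R).
Hypotheses (HP : is_distr P) (Hmart : martingale_cond eps P).
Hypothesis HV : supermartingale_potential ((1 - eps) / 2) V.

Lemma expectation_take_succ_le t : (t < T)%N ->
  \sum_x P x * V (take t.+1 x) <= \sum_x P x * V (take t x).
Proof.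
move=> Ht; have [HP0 _] := HP.
under eq_bigr do rewrite (take_nth false) ?size_tuple //.
have Ht' := ltnW Ht.
rewrite (sum_by_prefix (fun b x => P x * V (rcons b (nth false x t))) Ht').
rewrite (sum_by_prefix (fun b x => P x * V b) Ht').
apply: ler_sum => b _.
rewrite (bigID (fun x : T.-tuple bool => nth false x t)) /=.
rewrite (eq_bigr (fun x => P x * V (rcons b true))); last by move=> x /andP [_ ->].
rewrite (eq_bigr (fun x => P x * V (rcons b false))
    (P := fun x : T.-tuple bool => (take t x == b) && ~~ nth false x t));
  last by move=> x /andP [_ /negbTE ->].
rewrite -!mulr_suml [X in _ <= X * _](bigID (fun x : T.-tuple bool => nth false x t)).
rewrite /=.
have [HV0 HV1] := HV b.
apply: mixture_le HV0 HV1; try by apply: sumr_ge0.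
have := Hmart Ht (size_tuple b).
rewrite /Pr.
rewrite (bigID (fun x : T.-tuple bool => nth false x t) (fun x => `[< take t x = b >])) /=.
have Eb x : `[< take t x = b >] = (take t x == b) by apply/asboolP/eqP.
congr (_ <= _ * (_ + _)); apply: eq_bigl => x; rewrite ?Eb //.
by apply/asboolP/andP => [[-> ->]|[/eqP -> ->]].
Qed.

Lemma expectation_le_potential_nil : \sum_x P x * V x <= V [::].
Proof.
have [_ HP1] := HP.
suff H t : (t <= T)%N -> \sum_x P x * V (take t x) <= V [::].
  by under eq_bigr do rewrite -[tval _](take_size) size_tuple; apply: H.
elim: t => [|t IH] Ht.
  by under eq_bigr do rewrite take0; rewrite -mulr_suml HP1 mul1r.
exact: le_trans (expectation_take_succ_le Ht) (IH (ltnW Ht)).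
Qed.
End Supermartingale.

Lemma supermartingale_potential_drop q V i : supermartingale_potential q V ->
  supermartingale_potential q (fun b => V (drop i b)).
Proof.
move=> HV b /=; case: (leqP i (size b)) => Hi.
  by rewrite !drop_rcons //; apply: HV.
rewrite !drop_oversize ?size_rcons ?(ltnW Hi) //.
by rewrite -mulrDl subrK mul1r.
Qed.

Lemma mixture_contract (K : realFieldType) (q c f0 f1 f A B : K) :
  0 <= q -> q <= 1 -> 0 <= f -> f0 <= A * f -> f1 <= B * f ->
  A <= c -> (1 - q) * A + q * B <= c ->
  f0 <= c * f /\ (1 - q) * f0 + q * f1 <= c * f.
Proof.
move=> Hq0 Hq1 Hf H0 H1 HA HAB; split; first exact: le_trans H0 (ler_wpM2r Hf HA).
apply: le_trans (ler_wpM2r Hf HAB).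
have X0 : 0 <= (1 - q) * (A * f - f0) by apply: mulr_ge0; lra.
have X1 : 0 <= q * (B * f - f1) by apply: mulr_ge0; lra.
nra.
Qed.

Section Potential.
Variables (eps : R) (k : nat).
Hypotheses (eps_gt0 : 0 < eps) (eps_lt1 : eps < 1).

Local Notation q := ((1 - eps) / 2).

(* [lra] and [nra] do not look at section hypotheses. *)
Local Ltac eps_bounds := have ? := eps_gt0; have ? := eps_lt1.

(* Inside the window the potential must contract by [theta] at every slot, and
   [gamma], [nu] are tuned for this; after the window, [kappa ^+ d.+1] is the
   gambler's-ruin probability that a walk with drift [-eps] climbs [d.+1]. *)
Definition theta := 1 - eps ^+ 3 / 8.
Definition gamma := 1 + eps ^+ 2 / 4.
Definition nu := (1 + eps)^-1.
Definition kappa := (1 - eps) / (1 + eps).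

Lemma q_ge0 : 0 <= q. Proof. eps_bounds; lra. Qed.
Lemma q_le1 : q <= 1. Proof. eps_bounds; lra. Qed.

Lemma nu_gt0 : 0 < nu. Proof. eps_bounds; by rewrite /nu invr_gt0; lra. Qed.

Lemma nu_mul_succ : nu * (1 + eps) = 1.
Proof. eps_bounds; by rewrite /nu mulVf //; lra. Qed.

Lemma gamma_ge1 : 1 <= gamma.
Proof. by rewrite /gamma lerDl; apply: divr_ge0; rewrite ?sqr_ge0. Qed.

Lemma gamma_ge0 : 0 <= gamma. Proof. by have := gamma_ge1; lra. Qed.

Lemma theta_gt0 : 0 < theta.
Proof.
eps_bounds; have ? : eps ^+ 3 < 1 by rewrite exprn_ilt1 //; lra.
by rewrite /theta; lra.
Qed.

Lemma kappa_ge0 : 0 <= kappa.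
Proof. eps_bounds; by rewrite /kappa divr_ge0 //; lra. Qed.

Lemma kappa_le1 : kappa <= 1.
Proof. eps_bounds; by rewrite /kappa ler_pdivrMr; lra. Qed.

Lemma kappa_le_nu : kappa <= nu.
Proof. eps_bounds; by rewrite /kappa /nu ler_pdivrMr ?mulVf; lra. Qed.

Lemma kappa_ruin : (1 - q) * kappa ^+ 2 + q = kappa.
Proof. eps_bounds; by rewrite /kappa; field; lra. Qed.

Lemma theta_gamma_ge1 : 1 <= theta * gamma.
Proof.
eps_bounds; rewrite /theta /gamma.
have E3 : eps ^+ 3 = eps * eps ^+ 2 by rewrite exprS.
have H2 : 0 < eps ^+ 2 by rewrite exprn_gt0.
have ? : eps ^+ 2 < 1 by rewrite exprn_ilt1 //; lra.
have H8 : 0 < 8 - 4 * eps - eps * eps ^+ 2 by nra.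
by have := mulr_gt0 H2 H8; rewrite E3; nra.
Qed.

Lemma climb_mixture_le : (1 - q) + q * gamma ^+ 2 <= theta * gamma.
Proof.
eps_bounds; rewrite /theta /gamma.
have E3 : eps ^+ 3 = eps * eps ^+ 2 by rewrite exprS.
have E4 : eps ^+ 2 * eps ^+ 2 = eps * eps ^+ 3 by rewrite -!exprD.
have ? : 0 < eps ^+ 3 by rewrite exprn_gt0.
by rewrite expr2; nra.
Qed.

Lemma nu_gamma_le_theta : nu * gamma <= theta.
Proof.
eps_bounds; rewrite mulrC /nu ler_pdivrMr; last by lra.
rewrite /theta /gamma; have E3 : eps ^+ 3 = eps * eps ^+ 2 by rewrite exprS.
have ? : 0 < eps ^+ 2 by rewrite exprn_gt0.
have ? : 0 < eps ^+ 3 by rewrite exprn_gt0.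
nra.
Qed.

Lemma candidate_mixture_le : (1 - q) * (nu * gamma) + q * (1 + eps) <= theta.
Proof.
eps_bounds; have -> : (1 - q) * (nu * gamma) = ((1 - q) * gamma) / (1 + eps).
  by rewrite /nu; field; lra.
rewrite -lerBrDr ler_pdivrMr; last by lra.
rewrite /theta /gamma; have E3 : eps ^+ 3 = eps * eps ^+ 2 by rewrite exprS.
have E4 : eps ^+ 2 * eps ^+ 2 = eps * eps ^+ 3 by rewrite -!exprD.
have ? : 0 < eps ^+ 2 by rewrite exprn_gt0.
have ? : 0 < eps ^+ 3 by rewrite exprn_gt0.
nra.
Qed.

Lemma new_candidate_mixture_le : (1 - q) * (nu * gamma) + q * gamma <= theta.
Proof.
eps_bounds; apply: le_trans candidate_mixture_le.
rewrite lerD2l ler_wpM2l ?q_ge0 // /gamma.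
have ? : eps ^+ 2 <= eps by rewrite expr2; nra.
lra.
Qed.

Definition window_pot (s : scan_state) : R :=
  match s with
  | Climb g => gamma ^+ g
  | Candidate d D => nu ^+ d.+1 * gamma ^+ (maxn D d).+1
  end.

Definition tail_pot (s : scan_state) : R :=
  if s is Candidate d _ then kappa ^+ d.+1 else 1.

Definition scan_pot (n : nat) (s : scan_state) : R :=
  if (n < k)%N then theta ^+ (k - n) * window_pot s else tail_pot s.

Definition potential (bits : seq bool) : R := scan_pot (size bits) (scan k bits).

Lemma window_pot_ge0 s : 0 <= window_pot s.
Proof.
have := nu_gt0; have := gamma_ge0.
by case: s => [g|d D] /= *; rewrite ?mulr_ge0 ?exprn_ge0 // ltW.
Qed.

Lemma tail_pot_ge0 s : 0 <= tail_pot s.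
Proof. by case: s => [g|d D] //=; rewrite exprn_ge0 ?kappa_ge0. Qed.

Lemma scan_pot_ge0 n s : 0 <= scan_pot n s.
Proof.
rewrite /scan_pot; case: ifP => _; last exact: tail_pot_ge0.
by rewrite mulr_ge0 ?exprn_ge0 ?window_pot_ge0 // ltW ?theta_gt0.
Qed.

Lemma tail_pot_le_window_pot s : tail_pot s <= window_pot s.
Proof.
case: s => [g|d D] /=; first exact: exprn_ege1 gamma_ge1.
apply: (@le_trans _ _ (nu ^+ d.+1)).
  by rewrite lerXn2r ?nnegrE ?kappa_ge0 ?kappa_le_nu ?(ltW nu_gt0).
by rewrite ler_peMr ?exprn_ge0 ?exprn_ege1 ?gamma_ge1 ?(ltW nu_gt0).
Qed.

Lemma window_pot_step s :
  window_pot (scan_step true s false) <= theta * window_pot s /\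
  (1 - q) * window_pot (scan_step true s false)
    + q * window_pot (scan_step true s true) <= theta * window_pot s.
Proof.
have Hg0 := gamma_ge0; have Hn0 := ltW nu_gt0.
case: s => [[|g]|d D] /=.
- rewrite maxn0 expr0 !expr1 mulr1.
  by split; [apply: nu_gamma_le_theta | apply: new_candidate_mixture_le].
- have E : theta * gamma ^+ g.+1 = gamma ^+ g * (theta * gamma) by rewrite exprS; ring.
  rewrite E; split.
    by rewrite -{1}(mulr1 (gamma ^+ g)) ler_wpM2l ?exprn_ge0 ?theta_gamma_ge1.
  have -> : (1 - q) * gamma ^+ g + q * gamma ^+ g.+2
          = gamma ^+ g * ((1 - q) + q * gamma ^+ 2) by rewrite !exprS expr0; ring.
  by rewrite ler_wpM2l ?exprn_ge0 ?climb_mixture_le.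
apply: (mixture_contract (A := nu * gamma) (B := 1 + eps)) q_ge0 q_le1 _ _ _
  nu_gamma_le_theta candidate_mixture_le; first exact: window_pot_ge0 (Candidate d D).
  apply: (@le_trans _ _ (nu ^+ d.+2 * gamma ^+ (maxn D d).+2)).
    by rewrite ler_wpM2l ?exprn_ge0 // ler_weXn2l ?gamma_ge1 //; lia.
  have -> : nu ^+ d.+2 * gamma ^+ (maxn D d).+2
          = nu * gamma * (nu ^+ d.+1 * gamma ^+ (maxn D d).+1).
    by rewrite [nu ^+ d.+2]exprS [gamma ^+ (maxn D d).+2]exprS; ring.
  by [].
case: d => [|d] /=.
  by rewrite maxn0 expr1 mulrA (mulrC (1 + eps)) nu_mul_succ mul1r.
apply: (@le_trans _ _ (nu ^+ d.+1 * gamma ^+ (maxn D d.+1).+1)).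
  by rewrite ler_wpM2l ?exprn_ge0 // ler_weXn2l ?gamma_ge1 //; lia.
by rewrite [nu ^+ d.+2]exprS !mulrA (mulrC (1 + eps)) nu_mul_succ mul1r.
Qed.

Lemma tail_pot_step s :
  tail_pot (scan_step false s false) <= tail_pot s /\
  (1 - q) * tail_pot (scan_step false s false)
    + q * tail_pot (scan_step false s true) <= tail_pot s.
Proof.
have Hk0 := kappa_ge0; have Hq0 := q_ge0; have Hq1 := q_le1.
case: s => [[|g]|d D] /=; try by split; lra.
split; first by rewrite ler_wiXn2l ?kappa_le1.
case: d => [|d] /=; first by rewrite mulr1 kappa_ruin expr1.
have -> : (1 - q) * kappa ^+ d.+3 + q * kappa ^+ d.+1
        = kappa ^+ d.+1 * ((1 - q) * kappa ^+ 2 + q) by rewrite !exprS expr0; ring.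
by rewrite kappa_ruin -exprSr.
Qed.

Lemma scan_pot_window_end n s : (n < k)%N ->
  scan_pot n.+1 s <= theta ^+ (k - n.+1) * window_pot s.
Proof.
move=> Hn; rewrite /scan_pot; case: ltnP => // Hk.
by rewrite (_ : k - n.+1 = 0)%N ?expr0 ?mul1r ?tail_pot_le_window_pot //; lia.
Qed.

Lemma potential_supermartingale : supermartingale_potential q potential.
Proof.
move=> bits; rewrite /potential !size_rcons !scan_rcons.
move: (size bits) (scan k bits) => n s.
case: (ltnP n k) => Hn; last first.
  by rewrite /scan_pot !ltnNge Hn (leqW Hn); apply: tail_pot_step.
have Ec : 0 <= theta ^+ (k - n.+1) by rewrite exprn_ge0 ?ltW ?theta_gt0.
have -> : scan_pot n s = theta ^+ (k - n.+1) * (theta * window_pot s).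
  by rewrite /scan_pot Hn mulrA -exprSr; congr (_ ^+ _ * _); lia.
have [W0 W1] := window_pot_step s.
have B0 := scan_pot_window_end (scan_step true s false) Hn.
have B1 := scan_pot_window_end (scan_step true s true) Hn.
split; first by apply: le_trans B0 _; rewrite ler_wpM2l.
apply: le_trans (ler_wpM2l Ec W1).
rewrite mulrDr mulrCA [_ * (q * _)]mulrCA.
have Hq1 : 0 <= 1 - q by have := q_le1; lra.
by apply: lerD; apply: ler_wpM2l; rewrite ?q_ge0.
Qed.

Lemma potential_nil : potential [::] = theta ^+ k.
Proof. by rewrite /potential /scan_pot /=; case: k => //= n; rewrite subn0 mulr1. Qed.

Lemma potential_climb bits g : (k <= size bits)%N -> scan k bits = Climb g ->
  potential bits = 1.
Proof. by rewrite /potential /scan_pot ltnNge => -> ->. Qed.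

Lemma potential_ge0 bits : 0 <= potential bits.
Proof. exact: scan_pot_ge0. Qed.
End Potential.

Lemma Pr_catalan_free_le T (eps : R) k i (P : T.-tuple bool -> R) :
  0 < eps -> eps < 1 -> is_distr P -> martingale_cond eps P ->
  Pr P (fun x => (i + k < size x)%N /\ catalan_free k i x) <= theta eps ^+ k.
Proof.
move=> He0 He1 HP Hmart; have [HP0 _] := HP.
pose V b := potential eps k (drop i b).
rewrite -(potential_nil eps k) -[potential eps k [::]]/(V [::]).
apply: le_trans (expectation_le_potential_nil HP Hmart _); last first.
  by apply: supermartingale_potential_drop; apply: potential_supermartingale.
apply: Pr_le_expectation => // [x|x [Hik Hfree]]; first exact: potential_ge0.
have [g Hg] := catalan_free_scan_climb (ltnW Hik) Hfree.
by rewrite /V (@potential_climb eps k _ g _ Hg) // size_drop; lia.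
Qed.

Lemma exp_pow_nat (y : R) n : exp y ^+ n = exp (y * n%:R)%R.
Proof.
elim: n => [|n IH]; first by rewrite expr0 mulr0 exp_0.
by rewrite exprS IH -nat1r mulrDr mulr1 -RplusE exp_plus.
Qed.

Lemma theta_pow_le_exp (eps : R) k : 0 < eps -> eps < 1 ->
  theta eps ^+ k <= exp (- (1 / 8 * eps ^+ 3 * k%:R))%R.
Proof.
move=> He0 He1; have -> : (- (1 / 8 * eps ^+ 3 * k%:R) = - (eps ^+ 3 / 8) * k%:R)%R.
  by ring.
rewrite -exp_pow_nat; apply: lerXn2r; rewrite ?nnegrE.
- exact: ltW (theta_gt0 He0 He1).
- exact/RleP/Rlt_le/exp_pos.
by have /RleP := exp_ineq1_le (- (eps ^+ 3 / 8))%R; rewrite RplusE R1E.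
Qed.

Theorem theorem2 :
  exists c1 c2 : R, 0 < c1 /\ 0 <= c2 /\
    forall (eps : R) (T k : nat) (P : T.-tuple bool -> R),
      0 < eps -> eps < 1 ->
      is_distr P -> martingale_cond eps P ->
      Pr P (violates_cp k) <= Pr P (violates_slot_cp k) /\
      Pr P (violates_slot_cp k)
        <= T%:R * exp (- (c1 * eps ^+ 3 * (1 - c2 * eps) * k%:R)).
Proof.
exists (1 / 8)%R, 0%R; split; first lra; split; first lra.
move=> eps T k P He0 He1 HP Hmart; have [HP0 _] := HP.
split; first by apply: Pr_le_of_imply => // x; apply: violates_cp_slot_cp.
pose window i x := (i + k < size x)%N /\ catalan_free k i x.
apply: (@le_trans _ _ (\sum_(i < T) Pr P (window i))).
  apply: Pr_union_le => // x /violates_slot_cp_catalan_free [i [Hik Hfree]].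
  by exists i; rewrite // -(size_tuple x); lia.
apply: (@le_trans _ _ (\sum_(i < T) theta eps ^+ k)).
  by apply: ler_sum => i _; apply: Pr_catalan_free_le.
rewrite sumr_const card_ord -[_ *+ T]mulr_natl; apply: ler_wpM2l => //.
rewrite !RmultE RminusE RoppE R1E mul0r subr0 mulr1.
exact: theta_pow_le_exp.
Qed.
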